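(* In the standing setting below, assume $A$ has full column rank and that $(w_t,Q_t)_{t=1}^T$ is a quadrature rule on $\mathrm{SO}(d+1)$ with positive weights and degree of accuracy $n\ge K$. Let $P_A=\sum_j(\beta_{\mathrm{aug}})_j\varphi_j$, where $\beta_{\mathrm{aug}}$ minimises $L_{\mathrm{aug}}$. Then $P_A$ is exactly rotation invariant: $\varepsilon_{\mathrm{sym}}(P_A)=0$.
   Context: $S^{N,d}=(S^d)^N$ with $L^2$ taken w.r.t. the product of normalised uniform surface measures; $Q\in\mathrm{SO}(d+1)$ acts elementwise, $Q\cdot(\mathbf r_1,\dots,\mathbf r_N)=(Q\mathbf r_1,\dots,Q\mathbf r_N)$. $V^{N,d}_K$: restrictions to $S^{N,d}$ of complex polynomials of total degree $\le K$ in Cartesian coordinates; $B^{N,d}_K$: its rotation-invariant subspace. Fix an orthonormal basis $\varphi_1,\dots,\varphi_m$ of $V^{N,d}_K$ with $\varphi_1,\dots,\varphi_{m_{\mathrm I}}$ a basis of $B^{N,d}_K$ and the rest a basis of its orthogonal complement. Data: points $R_1,\dots,R_n\in S^{N,d}$, a rotation-invariant target $f$, $Y_i=f(R_i)$; design matrix $A_{ij}=\varphi_j(R_i)$; $(A\circ Q)_{ij}=\varphi_j(Q\cdot R_i)$. Augmentation parameters: weights $w_1,\dots,w_T$ with $\sum_tw_t=1$ and rotations $Q_1,\dots,Q_T$; the augmented loss is $L_{\mathrm{aug}}(\beta)=\frac12\sum_tw_t\|(A\circ Q_t)\beta-Y\|^2$. A quadrature rule $(w_t,Q_t)_{t=1}^T$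 on $\mathrm{SO}(d+1)$ has degree of accuracy $n$ if $\sum_tw_tp(Q_t)=\int_{\mathrm{SO}(d+1)}p\,dH$ for every polynomial $p$ of degree $\le n$ in the matrix entries of $Q$, where $H$ is the normalised Haar measure. $\varepsilon_{\mathrm{sym}}(g)=\|g-\mathrm{sym}(g)\|_{L^2}$ with $\mathrm{sym}$ the $L^2$-orthogonal projection onto rotation-invariant functions. *)

From HB Require Import structures.
From mathcomp Require Import all_boot all_order all_algebra.
From mathcomp Require Import all_classical all_reals all_analysis.
From mathcomp Require Import complex.

Unset Implicit Arguments.
Unset Strict Implicit.
Unset Printing Implicit Defensive.

Import Order.TTheory GRing.Theory Num.Theory.
Import numFieldNormedType.Exports.

Local Open Scope classical_set_scope.
Local Open Scope ring_scope.
Local Open Scope complex_scope.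

Section Setting.
Variable R : realType.

(* Ambient spaces.  A point of S^{N,d} = (S^d)^N is represented as an  *)
(* N x (d+1) real matrix whose i-th row is r_i; a point of S^d is a    *)
(* 1 x (d+1) row.  Rotations Q in SO(d+1) act on a row r by r |-> Q r  *)
(* (column convention), i.e. r^T |-> r^T Q^T; on S^{N,d} elementwise:  *)
(* M |-> M Q^T.                                                       *)

(* Borel sigma-algebra on real a x b matrices (= Borel sets of R^(ab)),  *)
(* generated by the coordinate maps.                                    *)
Definition coord_sets (a b : nat) : set (set (matrix R a b)) :=
  [set A | exists (i : 'I_a) (j : 'I_b) (B : set R),
     measurable B /\ A = (fun M : (matrix R a b) => M i j) @^-1` B].

Local Notation Mx a b := (g_sigma_algebraType (coord_sets a b)).

Definition SOset (k : nat) : set (matrix R k k) :=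
  [set Q | Q^T *m Q = 1%:M /\ \det Q = 1].

Definition sphere (k : nat) : set (matrix R 1 k) :=
  [set r | \sum_j r 0 j ^+ 2 = 1].

Definition sphereN (N k : nat) : set (matrix R N k) :=
  [set M | forall i : 'I_N, row i M \in sphere k].

Definition rot (N k : nat) (Q : (matrix R k k)) (M : (matrix R N k)) : (matrix R N k) :=
  M *m Q^T.

Definition is_Haar (k : nat) (H : {measure set (Mx k k) -> \bar R}) : Prop :=
  [/\ H setT = 1%E,
      H (~` (SOset k : set (Mx k k))) = 0%E &
      forall (Q : (matrix R k k)) (A : set (Mx k k)), Q \in SOset k -> measurable A ->
        H ((fun M : Mx k k => (Q *m M : Mx k k)) @^-1` A) = H A].

Definition is_unif_sphere (k : nat) (sigma : {measure set (Mx 1 k) -> \bar R})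
  : Prop :=
  [/\ sigma setT = 1%E,
      sigma (~` (sphere k : set (Mx 1 k))) = 0%E &
      forall (Q : (matrix R k k)) (A : set (Mx 1 k)), Q \in SOset k -> measurable A ->
        sigma ((fun r : Mx 1 k => (r *m Q^T : Mx 1 k)) @^-1` A) = sigma A].

Definition is_product_measure (N k : nat) (sigma : {measure set (Mx 1 k) -> \bar R})
  (mu : {measure set (Mx N k) -> \bar R}) : Prop :=
  forall A : 'I_N -> set (Mx 1 k), (forall i, measurable (A i)) ->
    mu [set M : Mx N k | forall i, A i (row i M)] = (\prod_i sigma (A i))%E.

Definition mxmono {T : comPzRingType} (a b : nat) (alpha : 'I_a -> 'I_b -> nat)
  (M : (matrix T a b)) : T := \prod_i \prod_j M i j ^+ alpha i j.

Definition mdeg (a b : nat) (alpha : 'I_a -> 'I_b -> nat) : nat :=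
  (\sum_i \sum_j alpha i j)%N.

Definition mxpoly_eval {T : comPzRingType} (a b : nat)
  (s : seq (T * ('I_a -> 'I_b -> nat))) (M : (matrix T a b)) : T :=
  \sum_(x <- s) x.1 * mxmono a b x.2 M.

Definition is_mx_poly (k n : nat) (p : (matrix R k k) -> R) : Prop :=
  exists s : seq (R * ('I_k -> 'I_k -> nat)),
    all (fun x => (mdeg k k x.2 <= n)%N) s /\ forall Q, p Q = mxpoly_eval k k s Q.

Definition quadrature_exact (k T n : nat) (H : {measure set (Mx k k) -> \bar R})
  (w : 'I_T -> R) (Q : 'I_T -> (matrix R k k)) : Prop :=
  forall p : (matrix R k k) -> R, is_mx_poly k n p ->
    ((\sum_t w t * p (Q t))%:E =
      \int[H]_(M in (SOset k : set (Mx k k))) (p M)%:E)%E.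

Definition cmx (a b : nat) (M : (matrix R a b)) : (matrix R[i] a b) :=
  map_mx (fun x => x%:C) M.

Definition inV (N k K : nat) (g : (matrix R N k) -> R[i]) : Prop :=
  exists s : seq (R[i] * ('I_N -> 'I_k -> nat)),
    all (fun x => (mdeg N k x.2 <= K)%N) s /\
    forall M, M \in sphereN N k -> g M = mxpoly_eval N k s (cmx N k M).

Definition rot_inv (N k : nat) (g : (matrix R N k) -> R[i]) : Prop :=
  forall Q M, Q \in SOset k -> M \in sphereN N k -> g (rot N k Q M) = g M.

Definition inB (N k K : nat) (g : (matrix R N k) -> R[i]) : Prop :=
  inV N k K g /\ rot_inv N k g.

Definition sqmod (z : R[i]) : R := complex.Re z ^+ 2 + complex.Im z ^+ 2.

Definition cint (N k : nat) (mu : {measure set (Mx N k) -> \bar R})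
  (g : (matrix R N k) -> R[i]) : R[i] :=
  (Rintegral mu (sphereN N k : set (Mx N k)) (fun M => complex.Re (g M)))
  +i* (Rintegral mu (sphereN N k : set (Mx N k)) (fun M => complex.Im (g M))).

Definition l2inner (N k : nat) (mu : {measure set (Mx N k) -> \bar R})
  (f g : (matrix R N k) -> R[i]) : R[i] :=
  cint N k mu (fun M => f M * (g M)^*).

Definition l2sq (N k : nat) (mu : {measure set (Mx N k) -> \bar R})
  (g : (matrix R N k) -> R[i]) : \bar R :=
  (\int[mu]_(M in (sphereN N k : set (Mx N k))) (sqmod (g M))%:E)%E.

Definition esqrt (x : \bar R) : \bar R :=
  match x with
  | EFin r => (Num.sqrt r)%:E
  | _ => x
  end.

Definition inv_L2 (N k : nat) (mu : {measure set (Mx N k) -> \bar R})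
  (h : (matrix R N k) -> R[i]) : Prop :=
  [/\ measurable_fun (sphereN N k : set (Mx N k)) (fun M : Mx N k => complex.Re (h M)),
      measurable_fun (sphereN N k : set (Mx N k)) (fun M : Mx N k => complex.Im (h M)),
      (l2sq N k mu h < +oo)%E &
      rot_inv N k h].

(* eps_sym(g) = || g - sym(g) ||_{L^2}, sym(g) being the orthogonal  *)
(* projection onto the (closed) subspace of rotation-invariant functions, *)
(* i.e. the distance from g to that subspace.                         *)
Definition eps_sym (N k : nat) (mu : {measure set (Mx N k) -> \bar R})
  (g : (matrix R N k) -> R[i]) : \bar R :=
  ereal_inf [set esqrt (l2sq N k mu (fun M => g M - h M)) | h in inv_L2 N k mu].

Definition design (N k n m : nat) (phi : 'I_m -> (matrix R N k) -> R[i])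
  (Rp : 'I_n -> (matrix R N k)) (Q : (matrix R k k)) : (matrix R[i] n m) :=
  \matrix_(i, j) phi j (rot N k Q (Rp i)).

Definition sqnorm (n : nat) (v : (matrix R[i] n 1)) : R := \sum_i sqmod (v i 0).

Definition L_aug (N k n m T : nat) (phi : 'I_m -> (matrix R N k) -> R[i])
  (Rp : 'I_n -> (matrix R N k)) (Y : (matrix R[i] n 1))
  (w : 'I_T -> R) (Q : 'I_T -> (matrix R k k)) (beta : (matrix R[i] m 1)) : R :=
  2^-1 * \sum_t w t * sqnorm n (design N k n m phi Rp (Q t) *m beta - Y).

Definition fexpand (N k m : nat) (phi : 'I_m -> (matrix R N k) -> R[i])
  (beta : (matrix R[i] m 1)) : (matrix R N k) -> R[i] :=
  fun M => \sum_j beta j 0 * phi j M.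

End Setting.

Notation Mx R a b := (g_sigma_algebraType (coord_sets R a b)).

(** The augmented least-squares problem decouples along the splitting of
    the coefficients into their invariant part (indices below [mI]) and the
    rest.  Rotations act trivially on the invariant basis functions, so the
    invariant part yields the same residual for every [Q_t].  For a basis
    function [phi_j] outside [B_K], the map [Q |-> phi_j (Q . M)] is a
    polynomial of degree at most [K] in the entries of [Q]; exactness of the
    rule (through left invariance of Haar measure and a transposition trick)
    makes the average [psi = sum_t w_t phi_j (Q_t .)] rotation invariant,
    i.e. [psi] lies in [B_K].  Rotation invariance of the measure on
    [S^{N,d}] makes [psi] orthogonal to [B_K], so [psi = 0].  The residuals
    of the non-invariant part thus average to zero over the rule and the
    augmented loss splits as a weighted Pythagoras sum; at a minimiser the
    non-invariant residuals [A(Q_t) beta_perp] vanish.  Full column rank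
    turns this into [sum_j (beta_perp)_j phi_j = 0] on the sphere, so [P_A]
    equals its invariant part: an invariant square integrable polynomial,
    at distance zero from the invariant functions. *)

From Pilot Require Import Defs.
From HB Require Import structures.
From mathcomp Require Import all_boot all_order all_algebra.
From mathcomp Require Import all_classical all_reals all_analysis.
From mathcomp Require Import complex.
From mathcomp Require Import ring lra measurable_realfun.
Import Order.TTheory GRing.Theory Num.Theory.
Import numFieldNormedType.Exports.
Local Open Scope classical_set_scope.
Local Open Scope ring_scope.
Local Open Scope complex_scope.

Set Implicit Arguments.
Unset Strict Implicit.

(** * Polynomial functions of the entries of a matrix *)

Section PolyFun.
Variable T : comPzRingType.

Definition polyfun (a b n : nat) (F : 'M[T]_(a, b) -> T) :=
  exists s : seq (T * ('I_a -> 'I_b -> nat)),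
    all (fun x => (mdeg a b x.2 <= n)%N) s /\ forall M, F M = mxpoly_eval a b s M.
Arguments polyfun : clear implicits.

Lemma polyfun_leq a b n n' F : (n <= n')%N -> polyfun a b n F -> polyfun a b n' F.
Proof.
move=> le_nn' [s [hs e]]; exists s; split => //.
by apply/allP => x /(allP hs) /= h; exact: leq_trans h le_nn'.
Qed.

Lemma eq_polyfun a b n F G : F =1 G -> polyfun a b n F -> polyfun a b n G.
Proof. by move=> e [s [hs h]]; exists s; split=> // M; rewrite -e. Qed.

Lemma polyfun_cst a b c : polyfun a b 0 (fun _ => c).
Proof.
exists [:: (c, fun _ _ => 0%N)]; split.
  by rewrite /= andbT /mdeg big1 // => i _; rewrite big1.
move=> M; rewrite /mxpoly_eval big_cons big_nil addr0 /= /mxmono.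
by rewrite big1 ?mulr1 // => i _; rewrite big1 // => j _; rewrite expr0.
Qed.

Lemma polyfun_add a b n F G : polyfun a b n F -> polyfun a b n G ->
  polyfun a b n (fun M => F M + G M).
Proof.
move=> [s [hs e]] [t [ht f]]; exists (s ++ t); split; first by rewrite all_cat hs ht.
by move=> M; rewrite e f /mxpoly_eval big_cat.
Qed.

Lemma mxmonoD a b (al be : 'I_a -> 'I_b -> nat) (M : 'M[T]_(a, b)) :
  mxmono a b (fun i j => al i j + be i j)%N M = mxmono a b al M * mxmono a b be M.
Proof.
rewrite /mxmono -big_split /=; apply: eq_bigr => i _.
by rewrite -big_split /=; apply: eq_bigr => j _; rewrite exprD.
Qed.

Lemma mdegD a b (al be : 'I_a -> 'I_b -> nat) :
  mdeg a b (fun i j => al i j + be i j)%N = (mdeg a b al + mdeg a b be)%N.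
Proof. by rewrite /mdeg -big_split /=; apply: eq_bigr => i _; rewrite -big_split. Qed.

Lemma polyfun_mul a b n n' F G : polyfun a b n F -> polyfun a b n' G ->
  polyfun a b (n + n') (fun M => F M * G M).
Proof.
move=> [s [hs e]] [t [ht f]].
exists [seq (x.1 * y.1, fun i j => (x.2 i j + y.2 i j)%N) | x <- s, y <- t]; split.
  apply/allP => z /allpairsP [[x y] [xs yt ->]] /=.
  by rewrite mdegD leq_add // ?(allP hs x xs) ?(allP ht y yt).
move=> M; rewrite e f /mxpoly_eval big_allpairs_dep big_distrl /=.
apply: eq_bigr => x _; rewrite big_distrr /=; apply: eq_bigr => y _.
by rewrite mxmonoD; ring.
Qed.

Lemma polyfun_scale a b n c F : polyfun a b n F -> polyfun a b n (fun M => c * F M).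
Proof. exact: polyfun_mul (polyfun_cst a b c). Qed.

Lemma polyfun_coord a b (i : 'I_a) (j : 'I_b) : polyfun a b 1 (fun M => M i j).
Proof.
exists [:: (1, fun i' j' => ((i' == i) && (j' == j) : nat))]; split.
  rewrite /= andbT /mdeg (bigD1 i) //= [X in (_ + X)%N]big1 => [|i' /negbTE hi]; last first.
    by apply: big1 => j' _; rewrite hi.
  rewrite addn0 (bigD1 j) //= !eqxx [X in (_ + X)%N]big1 // => j' /negbTE ->.
  by rewrite andbF.
move=> M; rewrite /mxpoly_eval big_cons big_nil addr0 /= mul1r /mxmono.
rewrite (bigD1 i) //= [X in _ * X]big1 ?mulr1 => [|i' /negbTE hi]; last first.
  by apply: big1 => j' _; rewrite hi expr0.
rewrite (bigD1 j) //= !eqxx expr1 [X in _ * X]big1 ?mulr1 // => j' /negbTE ->.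
by rewrite andbF expr0.
Qed.

Lemma polyfun_sum a b n (I : Type) (r : seq I) (F : I -> 'M[T]_(a, b) -> T) :
  (forall i, polyfun a b n (F i)) -> polyfun a b n (fun M => \sum_(i <- r) F i M).
Proof.
move=> h; elim: r => [|x r IH].
  by apply: (eq_polyfun (F := fun _ => 0)) (polyfun_leq _ (polyfun_cst _ _ _)) => // M;
    rewrite big_nil.
by apply: eq_polyfun (polyfun_add (h x) IH) => M; rewrite big_cons.
Qed.

Lemma polyfun_prod a b (I : Type) (r : seq I) (n : I -> nat) (F : I -> 'M[T]_(a, b) -> T) :
  (forall i, polyfun a b (n i) (F i)) ->
  polyfun a b (\sum_(i <- r) n i) (fun M => \prod_(i <- r) F i M).
Proof.
move=> h; elim: r => [|x r IH].
  by rewrite big_nil; apply: (eq_polyfun (F := fun _ => 1)) (polyfun_cst _ _ _) => M;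
    rewrite big_nil.
by rewrite big_cons; apply: eq_polyfun (polyfun_mul (h x) IH) => M; rewrite big_cons.
Qed.

Lemma polyfun_exp a b n k F : polyfun a b n F -> polyfun a b (k * n) (fun M => F M ^+ k).
Proof.
move=> h; elim: k => [|k IH].
  by apply: (eq_polyfun (F := fun _ => 1)) (polyfun_cst _ _ _) => M; rewrite expr0.
by rewrite mulSn; apply: eq_polyfun (polyfun_mul h IH) => M; rewrite exprS.
Qed.

Lemma polyfun_comp a b c e n (F : 'M[T]_(a, b) -> T) (G : 'M[T]_(c, e) -> 'M[T]_(a, b)) :
  polyfun a b n F -> (forall i j, polyfun c e 1 (fun X => G X i j)) ->
  polyfun c e n (fun X => F (G X)).
Proof.
move=> [s [hs eF]] hG.
apply: (eq_polyfun (F := fun X => \sum_(x <- s) x.1 * mxmono a b x.2 (G X))).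
  by move=> X; rewrite eF.
elim: s hs {eF} => [|x s IH] /=.
  by move=> _; apply: (eq_polyfun (F := fun _ => 0)) (polyfun_leq _ (polyfun_cst _ _ _))
    => // M; rewrite big_nil.
move=> /andP[hx hs]; apply: (eq_polyfun _ (polyfun_add _ (IH hs))) => [X|].
  by rewrite big_cons.
apply/polyfun_scale/(polyfun_leq hx).
rewrite /mdeg /mxmono; apply: polyfun_prod => i; apply: polyfun_prod => j.
by have := polyfun_exp (x.2 i j) (hG i j); rewrite muln1.
Qed.

Lemma polyfun_mulmxr a b c (B : 'M[T]_(b, c)) i j :
  polyfun a b 1 (fun X => (X *m B) i j).
Proof.
apply: (eq_polyfun (F := fun X => \sum_l B l j * X i l)).
  by move=> X; rewrite mxE; apply: eq_bigr => l _; rewrite mulrC.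
by apply: polyfun_sum => l; apply/polyfun_scale/polyfun_coord.
Qed.

Lemma polyfun_mulmxl a b c (B : 'M[T]_(c, a)) i (j : 'I_b) :
  polyfun a b 1 (fun X => (B *m X) i j).
Proof.
apply: (eq_polyfun (F := fun X => \sum_l B i l * X l j)); first by move=> X; rewrite mxE.
by apply: polyfun_sum => l; apply/polyfun_scale/polyfun_coord.
Qed.

Lemma polyfun_trmx a b i j : polyfun a b 1 (fun X : 'M[T]_(a, b) => X^T i j).
Proof. by apply: eq_polyfun (polyfun_coord j i) => X; rewrite mxE. Qed.

Lemma polyfun_mulmx_trmx a b c (B : 'M[T]_(c, a)) i (j : 'I_b) :
  polyfun b a 1 (fun X => (B *m X^T) i j).
Proof.
apply: (eq_polyfun (F := fun X => \sum_l B i l * X j l)).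
  by move=> X; rewrite mxE; apply: eq_bigr => l _; rewrite mxE.
by apply: polyfun_sum => l; apply/polyfun_scale/polyfun_coord.
Qed.

End PolyFun.
Arguments polyfun {T} a b n F.

(** * Rotations and the spaces [V_K] *)

Section Rotations.
Variable R : realType.

Lemma SOset_mul_trmx k (Q : 'M[R]_k) : Q \in SOset R k -> Q *m Q^T = 1%:M.
Proof. by rewrite inE => -[h _]; exact: mulmx1C. Qed.

Lemma SOsetM k (Q Q' : 'M[R]_k) : Q \in SOset R k -> Q' \in SOset R k ->
  Q *m Q' \in SOset R k.
Proof.
rewrite !inE => -[h1 d1] [h2 d2]; split; last by rewrite det_mulmx d1 d2 mulr1.
by rewrite trmx_mul -mulmxA (mulmxA Q^T) h1 mul1mx.
Qed.

Lemma SOset_trmx k (Q : 'M[R]_k) : Q \in SOset R k -> Q^T \in SOset R k.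
Proof.
move=> hQ; have QQT := SOset_mul_trmx hQ.
by move: hQ; rewrite !inE => -[_ d]; split; rewrite ?trmxK // det_tr.
Qed.

Lemma SOset_memV k (Q M : 'M[R]_k) : Q \in SOset R k ->
  (Q *m M \in SOset R k) = (M \in SOset R k).
Proof.
move=> hQ; apply/idP/idP => [hQM|]; last exact: SOsetM.
have := SOsetM (SOset_trmx hQ) hQM.
by move: hQ; rewrite inE mulmxA => -[-> _]; rewrite mul1mx.
Qed.

Variables N k : nat.
Local Notation rot := (Defs.rot R N k).

Lemma rotM (Q Q' : 'M[R]_k) M : rot Q (rot Q' M) = rot (Q *m Q') M.
Proof. by rewrite /Defs.rot trmx_mul mulmxA. Qed.

Lemma rot1 M : rot 1%:M M = M.
Proof. by rewrite /Defs.rot trmx1 mulmx1. Qed.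

Lemma rotK (Q : 'M[R]_k) M : Q \in SOset R k -> rot Q (rot Q^T M) = M.
Proof. by move=> hQ; rewrite rotM SOset_mul_trmx // rot1. Qed.

Lemma rot_sphereN (Q : 'M[R]_k) M : Q \in SOset R k ->
  M \in sphereN R N k -> rot Q M \in sphereN R N k.
Proof.
have sq_row (r : 'M[R]_(1, k)) : \sum_j r 0 j ^+ 2 = (r *m r^T) 0 0.
  by rewrite mxE; apply: eq_bigr => j _; rewrite mxE expr2.
rewrite !inE => -[QTQ _] hM i; have := hM i.
rewrite !inE /sphere /= !sq_row /Defs.rot row_mul trmx_mul trmxK.
by rewrite -mulmxA (mulmxA Q^T) QTQ mul1mx.
Qed.

Lemma preimage_rot_sphereN (Q : 'M[R]_k) : Q \in SOset R k ->
  rot Q @^-1` sphereN R N k = sphereN R N k.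
Proof.
move=> hQ; apply/seteqP; split => M /= hM; rewrite -in_setE.
  rewrite -(rotK M (SOset_trmx hQ)) trmxK.
  by apply: rot_sphereN; [exact: SOset_trmx|rewrite in_setE].
by apply: rot_sphereN => //; rewrite in_setE.
Qed.

Lemma cmxM a (X : 'M[R]_(a, k)) (Q : 'M[R]_k) :
  cmx R a k (X *m Q^T) = cmx R a k X *m (cmx R k k Q)^T.
Proof. by rewrite /cmx map_mxM map_trmx. Qed.

Lemma mxmono_cmx a b (al : 'I_a -> 'I_b -> nat) (X : 'M[R]_(a, b)) :
  mxmono a b al (cmx R a b X) = (mxmono a b al X)%:C.
Proof.
rewrite /mxmono rmorph_prod; apply: eq_bigr => i _.
by rewrite rmorph_prod; apply: eq_bigr => j _; rewrite rmorphXn mxE.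
Qed.

Lemma Re_sum (I : Type) (r : seq I) (F : I -> R[i]) :
  complex.Re (\sum_(x <- r) F x) = \sum_(x <- r) complex.Re (F x).
Proof. exact: (raddf_sum (@complex.Re R : Rcomplex R -> R)). Qed.

Lemma Im_sum (I : Type) (r : seq I) (F : I -> R[i]) :
  complex.Im (\sum_(x <- r) F x) = \sum_(x <- r) complex.Im (F x).
Proof. exact: (raddf_sum (@complex.Im R : Rcomplex R -> R)). Qed.

Lemma Re_rmul (c : R[i]) (x : R) : complex.Re (c * x%:C) = complex.Re c * x.
Proof. by case: c => a b /=; rewrite mulr0 subr0. Qed.

Lemma Im_rmul (c : R[i]) (x : R) : complex.Im (c * x%:C) = complex.Im c * x.
Proof. by case: c => a b /=; rewrite mulr0 add0r. Qed.

Lemma polyfun_Re a b n (F : 'M[R[i]]_(a, b) -> R[i]) : polyfun a b n F ->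
  polyfun a b n (fun X : 'M[R]_(a, b) => complex.Re (F (cmx R a b X))).
Proof.
move=> [s [hs e]]; exists [seq (complex.Re x.1, x.2) | x <- s]; split.
  by rewrite all_map; apply: sub_all hs => x.
move=> X; rewrite e /mxpoly_eval big_map Re_sum; apply: eq_bigr => x _.
by rewrite mxmono_cmx Re_rmul.
Qed.

Lemma polyfun_Im a b n (F : 'M[R[i]]_(a, b) -> R[i]) : polyfun a b n F ->
  polyfun a b n (fun X : 'M[R]_(a, b) => complex.Im (F (cmx R a b X))).
Proof.
move=> [s [hs e]]; exists [seq (complex.Im x.1, x.2) | x <- s]; split.
  by rewrite all_map; apply: sub_all hs => x.
move=> X; rewrite e /mxpoly_eval big_map Im_sum; apply: eq_bigr => x _.
by rewrite mxmono_cmx Im_rmul.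
Qed.

Variable K : nat.

Lemma inVP g : inV R N k K g <->
  exists F, polyfun N k K F /\ forall M, M \in sphereN R N k -> g M = F (cmx R N k M).
Proof.
split=> [[s [hs e]]|[F [[s [hs e]] h]]]; first by exists (mxpoly_eval N k s); split => //; exists s.
by exists s; split => // M hM; rewrite h // e.
Qed.

Lemma inV_rot (Q : 'M[R]_k) g : Q \in SOset R k -> inV R N k K g ->
  inV R N k K (fun M => g (rot Q M)).
Proof.
move=> hQ /inVP [F [hF e]]; apply/inVP.
exists (fun X => F (X *m (cmx R k k Q)^T)); split.
  by apply: polyfun_comp hF _ => i j; exact: polyfun_mulmxr.
by move=> M hM; rewrite e; [rewrite /Defs.rot cmxM|exact: rot_sphereN].
Qed.

Lemma inV_lin (I : finType) (c : I -> R[i]) (g : I -> 'M[R]_(N, k) -> R[i]) :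
  (forall i, inV R N k K (g i)) -> inV R N k K (fun M => \sum_i c i * g i M).
Proof.
move=> /(fun h i => iffLR (inVP (g i)) (h i)) /choice [F hF]; apply/inVP.
exists (fun X => \sum_i c i * F i X); split.
  by apply: polyfun_sum => i; apply/polyfun_scale/(hF i).1.
by move=> M hM; apply: eq_bigr => i _; rewrite (hF i).2.
Qed.

Lemma inV_orbit_poly g M : inV R N k K g ->
  exists pr pi : 'M[R]_k -> R, [/\ polyfun k k K pr, polyfun k k K pi &
   forall Q, Q \in SOset R k -> M \in sphereN R N k -> g (rot Q M) = pr Q +i* pi Q].
Proof.
move=> /inVP [F [hF e]].
pose G := fun X : 'M[R[i]]_k => F (cmx R N k M *m X^T).
have hG : polyfun k k K G by apply: polyfun_comp hF _ => i j; exact: polyfun_mulmx_trmx.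
exists (fun Q => complex.Re (G (cmx R k k Q))), (fun Q => complex.Im (G (cmx R k k Q))).
split; [exact: polyfun_Re|exact: polyfun_Im|].
by move=> Q hQ hM; rewrite e; [rewrite /G /Defs.rot cmxM; case: (F _)|exact: rot_sphereN].
Qed.

End Rotations.

(** * Measurability and boundedness of polynomial functions *)

Section Measurability.
Variable R : realType.

Lemma measurable_coord a b (i : 'I_a) (j : 'I_b) :
  measurable_fun setT (fun M : Mx R a b => M i j).
Proof. by move=> _ B mB; rewrite setTI; apply: sub_sigma_algebra; exists i, j, B. Qed.

Lemma measurable_polyfun a b n (p : 'M[R]_(a, b) -> R) : polyfun a b n p ->
  measurable_fun setT (p : Mx R a b -> R).
Proof.
move=> [s [_ e]]; apply: (eq_measurable_fun (fun M : Mx R a b => mxpoly_eval a b s M)).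
  by move=> M _; rewrite e.
rewrite /mxpoly_eval; elim: s {e} => [|x s IH].
  by under eq_fun do rewrite big_nil; exact: measurable_cst.
under eq_fun do rewrite big_cons.
apply: measurable_funD => //; apply: measurable_funM; first exact: measurable_cst.
rewrite /mxmono; elim: (index_enum _) => [|i r IHi].
  by under eq_fun do rewrite big_nil; exact: measurable_cst.
under eq_fun do rewrite big_cons.
apply: measurable_funM => //; elim: (index_enum _) => [|j r' IHj].
  by under eq_fun do rewrite big_nil; exact: measurable_cst.
under eq_fun do rewrite big_cons.
by apply: measurable_funM => //; apply: measurable_funX; exact: measurable_coord.
Qed.

Lemma polyfun_bounded a b n (p : 'M[R]_(a, b) -> R) : polyfun a b n p ->
  exists C, forall M : 'M[R]_(a, b), (forall i j, `|M i j| <= 1) -> `|p M| <= C.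
Proof.
have prod_le1 (I : Type) (r : seq I) (F : I -> R) :
    (forall i, `|F i| <= 1) -> `|\prod_(i <- r) F i| <= 1.
  move=> hF; apply: (big_ind (fun x : R => `|x| <= 1)) => [|x y hx hy|i _] //.
    by rewrite normr1.
  by rewrite normrM mulr_ile1.
move=> [s [_ e]]; exists (\sum_(x <- s) `|x.1|) => M hM.
rewrite e /mxpoly_eval; apply: le_trans (ler_norm_sum _ _ _) _.
apply: ler_sum => x _; rewrite normrM -[leRHS]mulr1 ler_wpM2l //.
by apply: (prod_le1) => i; apply: (prod_le1) => j; rewrite normrX exprn_ile1.
Qed.

Lemma sqr_le1_norm (x : R) : x ^+ 2 <= 1 -> `|x| <= 1.
Proof. by move=> h; rewrite ler_norml; apply/andP; split; nra. Qed.

Lemma sphereN_entry_le1 N k (M : 'M[R]_(N, k)) : M \in sphereN R N k ->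
  forall i j, `|M i j| <= 1.
Proof.
rewrite inE => hM i j; have := hM i; rewrite inE /sphere /= => h.
apply: sqr_le1_norm; rewrite -h (bigD1 j) //= mxE lerDl.
by apply: sumr_ge0 => l _; rewrite sqr_ge0.
Qed.

Lemma SOset_entry_le1 k (Q : 'M[R]_k) : Q \in SOset R k -> forall i j, `|Q i j| <= 1.
Proof.
rewrite inE => -[QTQ _] i j; apply: sqr_le1_norm.
have : (Q^T *m Q) j j = 1 by rewrite QTQ mxE eqxx.
rewrite mxE => <-; rewrite (bigD1 i) //= mxE -expr2 lerDl.
by apply: sumr_ge0 => l _; rewrite mxE -expr2 sqr_ge0.
Qed.

Definition ispoly a b (p : 'M[R]_(a, b) -> R) := exists n, polyfun a b n p.

Lemma measurable_ispoly a b p : @ispoly a b p -> measurable_fun setT (p : Mx R a b -> R).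
Proof. by case=> n; exact: measurable_polyfun. Qed.

Lemma eq_ispoly a b p q : p =1 q -> @ispoly a b p -> ispoly q.
Proof. by move=> e [n h]; exists n; exact: eq_polyfun h. Qed.

Lemma ispoly_cst a b c : @ispoly a b (fun _ => c).
Proof. by exists 0%N; exact: polyfun_cst. Qed.

Lemma ispoly_coord a b i j : @ispoly a b (fun M => M i j).
Proof. by exists 1%N; exact: polyfun_coord. Qed.

Lemma ispoly_add a b p q : @ispoly a b p -> ispoly q -> ispoly (fun M => p M + q M).
Proof.
move=> [n hp] [n' hq]; exists (n + n')%N; apply: polyfun_add.
  exact: polyfun_leq (leq_addr _ _) hp.
exact: polyfun_leq (leq_addl _ _) hq.
Qed.

Lemma ispoly_mul a b p q : @ispoly a b p -> ispoly q -> ispoly (fun M => p M * q M).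
Proof. by move=> [n hp] [n' hq]; exists (n + n')%N; apply: polyfun_mul. Qed.

Lemma ispoly_sub a b p q : @ispoly a b p -> ispoly q -> ispoly (fun M => p M - q M).
Proof.
move=> hp hq; apply: eq_ispoly (ispoly_add hp (ispoly_mul (ispoly_cst a b (-1)) hq)).
by move=> M; rewrite mulN1r.
Qed.

Lemma ispoly_sum a b (I : finType) (F : I -> 'M[R]_(a, b) -> R) :
  (forall i, ispoly (F i)) -> ispoly (fun M => \sum_i F i M).
Proof.
move=> /choice [n hn]; exists (\sum_i n i)%N; apply: polyfun_sum => i.
by apply: polyfun_leq (hn i); rewrite (bigD1 i) //= leq_addr.
Qed.

Lemma ispoly_det k : @ispoly k k (fun Q => \det Q).
Proof.
apply: ispoly_sum => s; apply: ispoly_mul; first exact: ispoly_cst.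
by eexists; apply: polyfun_prod => i; exact: polyfun_coord.
Qed.

Lemma measurable_ispoly_zeros a b (p : 'M[R]_(a, b) -> R) : ispoly p ->
  measurable [set M : Mx R a b | p M = 0].
Proof.
by move=> /measurable_ispoly mp; have := mp measurableT _ (measurable_set1 0); rewrite setTI.
Qed.

Lemma measurable_sphereN N k : measurable (sphereN R N k : set (Mx R N k)).
Proof.
pose p := fun M : 'M[R]_(N, k) => \sum_i (\sum_j M i j ^+ 2 - 1) ^+ 2.
have hp : ispoly p.
  apply: ispoly_sum => i; apply: ispoly_mul; (apply: ispoly_sub; last exact: ispoly_cst);
  by apply: ispoly_sum => j; apply: ispoly_mul; exact: ispoly_coord.
rewrite (_ : sphereN R N k = [set M | p M = 0]); first exact: measurable_ispoly_zeros.
have rowE (M : 'M[R]_(N, k)) i : \sum_j row i M 0 j ^+ 2 = \sum_j M i j ^+ 2.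
  by apply: eq_bigr => j _; rewrite mxE.
apply/seteqP; split => M /=.
  move=> hM; apply: big1 => i _; have := hM i.
  by rewrite inE /sphere /= rowE => ->; rewrite subrr expr0n.
move=> /eqP; rewrite psumr_eq0 => [/allP h i|i _]; last exact: sqr_ge0.
have := h i (mem_index_enum _); rewrite /= sqrf_eq0 subr_eq0 => /eqP hi.
by rewrite inE /sphere /= rowE.
Qed.

Lemma measurable_SOset k : measurable (SOset R k : set (Mx R k k)).
Proof.
pose p := fun Q : 'M[R]_k =>
  \sum_i \sum_j ((Q^T *m Q) i j - (1%:M : 'M[R]_k) i j) ^+ 2 + (\det Q - 1) ^+ 2.
have hp : ispoly p.
  have QTQ i j : ispoly (fun Q : 'M[R]_k => (Q^T *m Q) i j).
    apply: (@eq_ispoly _ _ (fun Q => \sum_l Q l i * Q l j)).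
      by move=> Q; rewrite mxE; apply: eq_bigr => l _; rewrite mxE.
    by apply: ispoly_sum => l; apply: ispoly_mul; exact: ispoly_coord.
  apply: ispoly_add; last by apply: ispoly_mul; apply: ispoly_sub (ispoly_det k) (ispoly_cst _ _ _).
  apply: ispoly_sum => i; apply: ispoly_sum => j.
  by apply: ispoly_mul; apply: ispoly_sub (QTQ i j) (ispoly_cst _ _ _).
rewrite (_ : SOset R k = [set M | p M = 0]); first exact: measurable_ispoly_zeros.
have sq_ge0 (x : R) : 0 <= x ^+ 2 by exact: sqr_ge0.
apply/seteqP; split => Q /=.
  move=> [h1 h2]; rewrite /p h1 h2 subrr expr0n addr0.
  by apply: big1 => i _; apply: big1 => j _; rewrite subrr expr0n.
move=> /eqP; rewrite /p paddr_eq0 ?sumr_ge0 // => [/andP[/eqP h1 /eqP h2]|i _]; last first.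
  exact: sumr_ge0.
split; last by move: h2 => /eqP; rewrite sqrf_eq0 subr_eq0 => /eqP.
apply/matrixP => i j; move: h1 => /eqP; rewrite psumr_eq0 => [|i' _]; last exact: sumr_ge0.
move=> /allP /(_ i (mem_index_enum _)) /=; rewrite psumr_eq0 // => /allP.
by move=> /(_ j (mem_index_enum _)); rewrite sqrf_eq0 subr_eq0 => /eqP.
Qed.

End Measurability.

(** * Rotation invariance of the reference measures *)

Section InvariantIntegrals.
Variable R : realType.

Lemma bounded_onP (T : Type) (A : set T) (f : T -> R) C :
  (forall x, A x -> `|f x| <= C) -> [bounded f x | x in A].
Proof.
move=> h; exists C; split; first exact: num_real.
by move=> c hc x Ax; apply: le_trans (h x Ax) (ltW hc).
Qed.

Lemma integral_comp_preserving d (T : measurableType d) (m : {measure set T -> \bar R})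
    (phi : T -> T) (D : set T) (G : T -> R) :
  measurable_fun setT phi -> (forall A, measurable A -> m (phi @^-1` A) = m A) ->
  measurable D -> phi @^-1` D = D -> (m D < +oo)%E ->
  measurable_fun setT G -> (exists C, forall x, D x -> `|G x| <= C) ->
  (\int[m]_(x in D) (G (phi x))%:E = \int[m]_(x in D) (G x)%:E)%E.
Proof.
move=> mphi phi_m mD phiD mDfin mG [C hC].
have mfG : measurable_fun setT (EFin \o G) by exact/measurable_EFinP.
have intGphi : m.-integrable (phi @^-1` D) ((EFin \o G) \o phi).
  rewrite phiD; apply: (measurable_bounded_integrable mD mDfin).
    exact: measurable_funS (measurableT_comp mG mphi).
  apply: (bounded_onP (C := C)) => x Dx; apply: hC.
  by have : (phi @^-1` D) x by rewrite phiD.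
have := integral_pushforward mphi mfG intGphi mD; rewrite phiD => <-.
by apply: eq_measure_integral => A mA _; exact: phi_m.
Qed.

Lemma measurable_mxfun a b c e (f : Mx R a b -> Mx R c e) :
  (forall i j, measurable_fun setT (fun X => f X i j)) -> measurable_fun setT f.
Proof.
move=> h; apply: (@measurability _ _ _ _ setT f (coord_sets R c e)) => //.
move=> _ [_ [i [j [B [mB ->]]]] <-].
exact: h i j measurableT B mB.
Qed.

Lemma measurable_mxmap a b c e (f : 'M[R]_(a, b) -> 'M[R]_(c, e)) :
  (forall i j, polyfun a b 1 (fun X => f X i j)) ->
  measurable_fun setT (f : Mx R a b -> Mx R c e).
Proof. by move=> h; apply: measurable_mxfun => i j; exact: measurable_polyfun (h i j). Qed.

Lemma measurable_row N k (i : 'I_N) :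
  measurable_fun setT ((fun M => row i M) : Mx R N k -> Mx R 1 k).
Proof.
apply: measurable_mxmap => i' j; apply: (eq_polyfun (F := fun M => M i j)).
  by move=> M; rewrite mxE.
exact: polyfun_coord.
Qed.

(* The pi-system on which [is_product_measure] determines the measure. *)
Definition rowset N k : set (set (Mx R N k)) :=
  [set S | exists A : 'I_N -> set (Mx R 1 k), (forall i, measurable (A i)) /\
    S = [set M | forall i, A i (row i M)]].
Arguments rowset : clear implicits.

Lemma measurable_rowset N k S : rowset N k S -> measurable S.
Proof.
move=> [A [mA ->]].
rewrite (_ : [set M | _] = \bigcap_(i in setT) ((fun M => row i M) @^-1` A i)).
  apply: fin_bigcap_measurable; first exact: finite_finset.
  by move=> i _; have := measurable_row i measurableT (mA i); rewrite setTI.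
by apply/seteqP; split => M /= h i; [move=> _; exact: h|exact: h].
Qed.

Lemma rowset_generates N k : @measurable _ (Mx R N k) = <<s rowset N k >>.
Proof.
apply/seteqP; split; last first.
  apply: smallest_sub; first exact: sigma_algebra_measurable.
  by move=> S; exact: measurable_rowset.
apply: smallest_sub; first exact: smallest_sigma_algebra.
move=> _ [i [j [B [mB ->]]]]; apply: sub_sigma_algebra.
exists (fun i' => if i' == i then [set r : Mx R 1 k | B (r 0 j)] else setT); split.
  by move=> i'; case: ifP => _ //; apply: sub_sigma_algebra; exists 0, j, B.
apply/seteqP; split => M /=.
  by move=> hB i'; case: ifP => // /eqP ->; rewrite /= ?mxE.
by move=> /(_ i); rewrite eqxx /= ?mxE.
Qed.

Lemma rowset_setI_closed N k : setI_closed (rowset N k).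
Proof.
move=> _ _ [A [mA ->]] [B [mB ->]]; exists (fun i => A i `&` B i); split.
  by move=> i; apply: measurableI.
by apply/seteqP; split => M /=; [move=> [h1 h2] i; split|move=> h; split => i; case: (h i)].
Qed.

Lemma rowsetT N k : rowset N k setT.
Proof. by exists (fun _ => setT); split => //; apply/seteqP; split. Qed.

Variables (N k : nat) (sigma : {measure set (Mx R 1 k) -> \bar R})
  (mu : {measure set (Mx R N k) -> \bar R}).
Hypotheses (sigma_unif : is_unif_sphere R k sigma)
  (mu_prod : is_product_measure R N k sigma mu).

Lemma product_measure_setT : mu setT = 1%E.
Proof.
have := @mu_prod (fun _ => setT) (fun _ => measurableT).
rewrite (_ : [set M | _] = setT); last by apply/seteqP; split.
by move=> ->; rewrite big1 // => i _; case: sigma_unif.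
Qed.

Lemma product_measure_rot (Q : 'M[R]_k) : Q \in SOset R k ->
  forall A : set (Mx R N k), measurable A -> mu (Defs.rot R N k Q @^-1` A) = mu A.
Proof.
move=> hQ A mA.
have mrot : measurable_fun setT (Defs.rot R N k Q : Mx R N k -> Mx R N k).
  by apply: measurable_mxmap => i j; exact: polyfun_mulmxr.
have mrow_rot : measurable_fun setT ((fun r => r *m Q^T) : Mx R 1 k -> Mx R 1 k).
  by apply: measurable_mxmap => i j; exact: polyfun_mulmxr.
apply: (@measure_unique _ R (Mx R N k) (rowset N k) (fun _ => setT) (rowset_generates N k)
  (@rowset_setI_closed N k) (fun _ => rowsetT N k) (bigcup_const _ _)
  (pushforward mu (Defs.rot R N k Q : Mx R N k -> Mx R N k)) mu) => //; last first.
  move=> _; change (mu (Defs.rot R N k Q @^-1` setT) < +oo)%E.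
  by rewrite preimage_setT product_measure_setT ltry.
move=> _ [B [mB ->]]; rewrite /pushforward /=.
have mBQ i : measurable ((fun r : Mx R 1 k => r *m Q^T) @^-1` B i).
  by have := mrow_rot measurableT _ (mB i); rewrite setTI.
transitivity (mu [set M : Mx R N k | forall i, ((fun r => r *m Q^T) @^-1` B i) (row i M)]).
  by congr (mu _); apply/seteqP; split => M /= h i; have := h i; rewrite /Defs.rot row_mul.
rewrite (mu_prod mBQ) (mu_prod mB); apply: eq_bigr => i _.
by case: sigma_unif => _ _ ->.
Qed.

End InvariantIntegrals.

(** * Integrals of polynomial functions over [S^{N,d}] *)

Section SphereIntegrals.
Variable R : realType.
Variables (N k : nat) (sigma : {measure set (Mx R 1 k) -> \bar R})
  (mu : {measure set (Mx R N k) -> \bar R}).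
Hypotheses (sigma_unif : is_unif_sphere R k sigma)
  (mu_prod : is_product_measure R N k sigma mu).

Local Notation rot := (Defs.rot R N k).
Local Notation S := (sphereN R N k : set (Mx R N k)).
Local Notation cint := (cint R N k mu).

Definition cpoly (g : 'M[R]_(N, k) -> R[i]) := exists pr pi : 'M[R]_(N, k) -> R,
  [/\ ispoly pr, ispoly pi & forall M, M \in sphereN R N k -> g M = pr M +i* pi M].

Lemma eq_cpoly f g : {in sphereN R N k, f =1 g} -> cpoly f -> cpoly g.
Proof. by move=> e [pr [pi [h1 h2 h3]]]; exists pr, pi; split => // M hM; rewrite -e // h3. Qed.

Lemma inV_cpoly K g : inV R N k K g -> cpoly g.
Proof.
move=> /inVP [F [hF e]].
exists (fun M => complex.Re (F (cmx R N k M))), (fun M => complex.Im (F (cmx R N k M))).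
split; [by exists K; exact: polyfun_Re|by exists K; exact: polyfun_Im|].
by move=> M hM; rewrite e //; case: (F _).
Qed.

Lemma cpoly_cst c : cpoly (fun _ => c).
Proof.
exists (fun _ => complex.Re c), (fun _ => complex.Im c).
by split; [exact: ispoly_cst|exact: ispoly_cst|case: c].
Qed.

Lemma cpoly_add f g : cpoly f -> cpoly g -> cpoly (fun M => f M + g M).
Proof.
move=> [pr [pi [h1 h2 h3]]] [qr [qi [h4 h5 h6]]].
exists (fun M => pr M + qr M), (fun M => pi M + qi M).
by split; [exact: ispoly_add|exact: ispoly_add|move=> M hM; rewrite h3 // h6].
Qed.

Lemma cpoly_mul f g : cpoly f -> cpoly g -> cpoly (fun M => f M * g M).
Proof.
move=> [pr [pi [h1 h2 h3]]] [qr [qi [h4 h5 h6]]].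
exists (fun M => pr M * qr M - pi M * qi M), (fun M => pr M * qi M + pi M * qr M); split.
- by apply: ispoly_sub; exact: ispoly_mul.
- by apply: ispoly_add; exact: ispoly_mul.
- by move=> M hM; rewrite h3 // h6.
Qed.

Lemma cpoly_conj f : cpoly f -> cpoly (fun M => (f M)^*).
Proof.
move=> [pr [pi [h1 h2 h3]]]; exists pr, (fun M => - pi M); split => //; last first.
  by move=> M hM; rewrite h3.
by apply: eq_ispoly (ispoly_sub (ispoly_cst _ _ 0) h2) => M; rewrite sub0r.
Qed.

Lemma cpoly_sum (I : Type) (r : seq I) (F : I -> 'M[R]_(N, k) -> R[i]) :
  (forall i, cpoly (F i)) -> cpoly (fun M => \sum_(i <- r) F i M).
Proof.
move=> h; elim: r => [|x r IH].
  by apply: eq_cpoly (cpoly_cst 0) => M _; rewrite big_nil.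
by apply: eq_cpoly (cpoly_add (h x) IH) => M _; rewrite big_cons.
Qed.

Lemma cpoly_rot (Q : 'M[R]_k) f : Q \in SOset R k -> cpoly f -> cpoly (fun M => f (rot Q M)).
Proof.
move=> hQ [pr [pi [h1 h2 h3]]].
have ispoly_rot p : ispoly p -> ispoly (fun M => p (rot Q M)).
  by move=> [n hn]; exists n; apply: polyfun_comp hn _ => i j; exact: polyfun_mulmxr.
exists (fun M => pr (rot Q M)), (fun M => pi (rot Q M)).
by split; [exact: ispoly_rot|exact: ispoly_rot|move=> M hM; rewrite h3 // rot_sphereN].
Qed.

Lemma mu_sphereN_lty : (mu S < +oo)%E.
Proof.
apply: le_lt_trans (_ : mu setT < +oo)%E.
  by apply: le_measure; rewrite ?inE //; exact: measurable_sphereN.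
by rewrite (product_measure_setT sigma_unif mu_prod) ltry.
Qed.

Lemma ispoly_bounded_sphereN p : ispoly p ->
  exists C, forall M, M \in sphereN R N k -> `|p M| <= C.
Proof.
move=> [n hn]; have [C hC] := polyfun_bounded hn.
by exists C => M hM; apply: hC; exact: sphereN_entry_le1.
Qed.

Lemma ispoly_integrable p (q : 'M[R]_(N, k) -> R) : ispoly p ->
  {in sphereN R N k, q =1 p} -> mu.-integrable S (EFin \o (q : Mx R N k -> R)).
Proof.
move=> hpol e; have [C hC] := ispoly_bounded_sphereN hpol.
apply: (measurable_bounded_integrable (@measurable_sphereN R N k) mu_sphereN_lty).
  apply: (eq_measurable_fun (p : Mx R N k -> R)) => [M hM|].
    by rewrite e //; move: hM; rewrite inE.
  by apply: measurable_funS (measurable_ispoly hpol) => //; exact: measurable_sphereN.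
by apply: (bounded_onP (C := C)) => M hM; rewrite e ?inE //; apply: hC; rewrite inE.
Qed.

Lemma cpoly_integrable_Re f : cpoly f ->
  mu.-integrable S (EFin \o (fun M : Mx R N k => complex.Re (f M))).
Proof. by move=> [pr [pi [h1 _ h3]]]; apply: (ispoly_integrable h1) => M hM; rewrite h3. Qed.

Lemma cpoly_integrable_Im f : cpoly f ->
  mu.-integrable S (EFin \o (fun M : Mx R N k => complex.Im (f M))).
Proof. by move=> [pr [pi [_ h2 h3]]]; apply: (ispoly_integrable h2) => M hM; rewrite h3. Qed.

Lemma eq_cint f g : {in sphereN R N k, f =1 g} -> cint f = cint g.
Proof.
move=> e; rewrite /Defs.cint.
by congr (_ +i* _); apply: eq_Rintegral => M hM; rewrite e // inE.
Qed.

Lemma cintD f g : cpoly f -> cpoly g -> cint (fun M => f M + g M) = cint f + cint g.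
Proof.
move=> hf hg; rewrite /Defs.cint.
have mS := @measurable_sphereN R N k.
rewrite (@eq_Rintegral _ _ _ mu _ (fun M => complex.Re (f M) + complex.Re (g M))); last first.
  by move=> M _; case: (f M); case: (g M).
rewrite [X in _ +i* X](@eq_Rintegral _ _ _ mu _ (fun M => complex.Im (f M) + complex.Im (g M))).
  2: by move=> M _; case: (f M); case: (g M).
rewrite (RintegralD mS (cpoly_integrable_Re hf) (cpoly_integrable_Re hg)).
by rewrite (RintegralD mS (cpoly_integrable_Im hf) (cpoly_integrable_Im hg)).
Qed.

Lemma cintZ c f : cpoly f -> cint (fun M => c * f M) = c * cint f.
Proof.
move=> hf; rewrite /Defs.cint.
have mS := @measurable_sphereN R N k.
have iRe := cpoly_integrable_Re hf; have iIm := cpoly_integrable_Im hf.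
rewrite (@eq_Rintegral _ _ _ mu _ (fun M =>
  complex.Re c * complex.Re (f M) - complex.Im c * complex.Im (f M))); last first.
  by move=> M _; case: (f M); case: c.
rewrite [X in _ +i* X](@eq_Rintegral _ _ _ mu _ (fun M =>
  complex.Re c * complex.Im (f M) + complex.Im c * complex.Re (f M))); last first.
  by move=> M _; case: (f M); case: c.
rewrite (RintegralB mS (integrableZl mS _ iRe) (integrableZl mS _ iIm)).
rewrite (RintegralD mS (integrableZl mS _ iIm) (integrableZl mS _ iRe)).
by rewrite !RintegralZl //; case: c.
Qed.

Lemma cint_sum (I : Type) (r : seq I) (c : I -> R[i]) (F : I -> 'M[R]_(N, k) -> R[i]) :
  (forall i, cpoly (F i)) ->
  cint (fun M => \sum_(i <- r) c i * F i M) = \sum_(i <- r) c i * cint (F i).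
Proof.
move=> h; elim: r => [|x r IH].
  rewrite big_nil (@eq_cint _ (fun _ => 0)) => [|M _]; last by rewrite big_nil.
  by rewrite /Defs.cint /Rintegral !integral0.
have cF i : cpoly (fun M => c i * F i M) by apply: cpoly_mul (cpoly_cst _) (h i).
rewrite big_cons -IH -cintZ // -cintD //; last exact: cpoly_sum.
by apply: eq_cint => M _; rewrite big_cons.
Qed.

Lemma cint_rot (Q : 'M[R]_k) f : Q \in SOset R k -> cpoly f ->
  cint (fun M => f (rot Q M)) = cint f.
Proof.
move=> hQ [pr [pi [h1 h2 h3]]].
have Rint_rot p : ispoly p -> Rintegral mu S (fun M => p (rot Q M)) = Rintegral mu S p.
  move=> hpol; rewrite /Rintegral; congr fine.
  have [C hC] := ispoly_bounded_sphereN hpol.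
  apply: (integral_comp_preserving (m := mu) (G := p : Mx R N k -> R)).
  - by apply: measurable_mxmap => i j; exact: polyfun_mulmxr.
  - exact: (product_measure_rot sigma_unif mu_prod hQ).
  - exact: measurable_sphereN.
  - exact: preimage_rot_sphereN.
  - exact: mu_sphereN_lty.
  - exact: measurable_ispoly.
  - by exists C => M hM; apply: hC; rewrite inE.
rewrite (@eq_cint _ (fun M => pr (rot Q M) +i* pi (rot Q M))) => [|M hM]; last first.
  by rewrite h3 // rot_sphereN.
rewrite [RHS](@eq_cint _ (fun M => pr M +i* pi M)) => [|M hM]; last by rewrite h3.
by rewrite /Defs.cint /= !Rint_rot.
Qed.

Lemma sqmod_ge0 (z : R[i]) : 0 <= sqmod R z.
Proof. by rewrite /sqmod addr_ge0 // sqr_ge0. Qed.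

Lemma cpoly_inv_L2 g : cpoly g -> rot_inv R N k g -> inv_L2 R N k mu g.
Proof.
move=> [pr [pi [h1 h2 h3]]] g_inv; have mS := @measurable_sphereN R N k.
split => //.
- apply: (eq_measurable_fun (pr : Mx R N k -> R)) => [M hM|]; first by rewrite h3.
  exact: measurable_funS (measurable_ispoly h1).
- apply: (eq_measurable_fun (pi : Mx R N k -> R)) => [M hM|]; first by rewrite h3.
  exact: measurable_funS (measurable_ispoly h2).
- apply: (integrable_lty mS).
  apply: (ispoly_integrable (p := fun M => pr M * pr M + pi M * pi M)).
    by apply: ispoly_add; apply: ispoly_mul.
  by move=> M hM; rewrite h3 // /sqmod /= !expr2.
Qed.

Lemma eps_sym_eq0 g : inv_L2 R N k mu g -> eps_sym R N k mu g = 0%E.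
Proof.
move=> g_L2; apply/eqP; rewrite eq_le; apply/andP; split.
  apply: ereal_inf_lbound; exists g => //.
  rewrite /l2sq (eq_integral (fun=> 0%E)) => [|M _]; last first.
    by rewrite subrr /sqmod /= expr0n addr0.
  by rewrite integral0 /= sqrtr0.
apply/ereal_infP => _ [h _ <-].
have : (0 <= l2sq R N k mu (fun M => (g M - h M)%R))%E.
  by apply: integral_ge0 => M _; rewrite lee_fin sqmod_ge0.
by case: (l2sq _ _ _ _ _) => [r| |] //=; rewrite lee_fin sqrtr_ge0.
Qed.

End SphereIntegrals.

(** * Invariance of the quadrature rule *)

Section Quadrature.
Variable R : realType.
Variables (k T nq : nat) (H : {measure set (Mx R k k) -> \bar R})
  (w : 'I_T -> R) (Q : 'I_T -> 'M[R]_k).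
Hypotheses (H_Haar : is_Haar R k H) (w_exact : quadrature_exact R k T nq H w Q)
  (w_sum1 : \sum_t w t = 1) (Q_SO : forall t, Q t \in SOset R k).

Lemma Haar_SOset_lty : (H (SOset R k) < +oo)%E.
Proof.
case: H_Haar => H1 _ _; apply: le_lt_trans (_ : H setT < +oo)%E.
  by apply: le_measure; rewrite ?inE //; exact: measurable_SOset.
by rewrite H1 ltry.
Qed.

Lemma quadrature_rotl n p (Q' : 'M[R]_k) : (n <= nq)%N -> polyfun k k n p ->
  Q' \in SOset R k -> \sum_t w t * p (Q' *m Q t) = \sum_t w t * p (Q t).
Proof.
move=> le_n_nq hp hQ'.
have hpQ' : polyfun k k n (fun M => p (Q' *m M)).
  by apply: polyfun_comp hp _ => i j; exact: polyfun_mulmxl.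
apply: EFin_inj; rewrite (w_exact (polyfun_leq le_n_nq hpQ')) (w_exact (polyfun_leq le_n_nq hp)).
have [C hC] := polyfun_bounded hp.
apply: (integral_comp_preserving (m := H) (G := p : Mx R k k -> R)).
- by apply: measurable_mxmap => i j; exact: polyfun_mulmxl.
- by move=> A mA; case: H_Haar => _ _ ->.
- exact: measurable_SOset.
- apply/seteqP; split => M /= hM; rewrite -in_setE.
    by rewrite -(SOset_memV M hQ') in_setE.
  by rewrite (SOset_memV M hQ') in_setE.
- exact: Haar_SOset_lty.
- exact: measurable_polyfun hp.
- by exists C => M hM; apply/hC/SOset_entry_le1; rewrite inE.
Qed.

(* By left invariance in either variable, the double average of
   [p (Q_s^T Q_t)] equals both the average of [p] and that of [p (. ^T)];
   right invariance then follows by transposition. *)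
Lemma quadrature_trmx n p : (n <= nq)%N -> polyfun k k n p ->
  \sum_t w t * p (Q t)^T = \sum_t w t * p (Q t).
Proof.
move=> le_n_nq hp.
have hpT : polyfun k k n (fun M => p M^T).
  by apply: polyfun_comp hp _ => i j; exact: polyfun_trmx.
pose S := \sum_s \sum_t w s * w t * p ((Q s)^T *m Q t).
have -> : \sum_t w t * p (Q t) = S.
  rewrite /S -[LHS]mul1r -w_sum1 big_distrl /=; apply: eq_bigr => s _.
  rewrite -(quadrature_rotl le_n_nq hp (SOset_trmx (Q_SO s))) big_distrr /=.
  by apply: eq_bigr => t _; rewrite mulrA.
rewrite /S exchange_big /= -[LHS]mul1r -w_sum1 big_distrl /=; apply: eq_bigr => t _.
rewrite -(quadrature_rotl le_n_nq hpT (SOset_trmx (Q_SO t))) big_distrr /=.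
by apply: eq_bigr => s _; rewrite trmx_mul trmxK; ring.
Qed.

Lemma quadrature_rotr n p (Q' : 'M[R]_k) : (n <= nq)%N -> polyfun k k n p ->
  Q' \in SOset R k -> \sum_t w t * p (Q t *m Q') = \sum_t w t * p (Q t).
Proof.
move=> le_n_nq hp hQ'.
have hpr : polyfun k k n (fun M => p (M *m Q')).
  by apply: polyfun_comp hp _ => i j; exact: polyfun_mulmxr.
have hpT : polyfun k k n (fun M => p M^T).
  by apply: polyfun_comp hp _ => i j; exact: polyfun_trmx.
rewrite -(quadrature_trmx le_n_nq hpr) -(quadrature_trmx le_n_nq hp).
rewrite -(quadrature_rotl le_n_nq hpT (SOset_trmx hQ')).
by apply: eq_bigr => t _; rewrite trmx_mul trmxK.
Qed.

End Quadrature.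

(** * Quadrature averages of the non-invariant basis functions *)

Section QuadratureAverage.
Variable R : realType.
Variables (N k K : nat) (sigma : {measure set (Mx R 1 k) -> \bar R})
  (mu : {measure set (Mx R N k) -> \bar R}) (H : {measure set (Mx R k k) -> \bar R}).
Hypotheses (sigma_unif : is_unif_sphere R k sigma)
  (mu_prod : is_product_measure R N k sigma mu) (H_Haar : is_Haar R k H).
Variables (T nq : nat) (w : 'I_T -> R) (Q : 'I_T -> 'M[R]_k).
Hypotheses (w_sum1 : \sum_t w t = 1) (Q_SO : forall t, Q t \in SOset R k)
  (w_exact : quadrature_exact R k T nq H w Q) (K_le_nq : (K <= nq)%N).

Local Notation rot := (Defs.rot R N k).

Definition quad_avg (g : 'M[R]_(N, k) -> R[i]) M := \sum_t (w t)%:C * g (rot (Q t) M).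

Lemma quad_avg_inV g : inV R N k K g -> inV R N k K (quad_avg g).
Proof. by move=> gV; apply: inV_lin => t; exact: inV_rot. Qed.

Lemma quad_avg_rot_inv g : inV R N k K g -> rot_inv R N k (quad_avg g).
Proof.
have sum_cplx (c a b : 'I_T -> R) :
    \sum_t (c t)%:C * (a t +i* b t) = (\sum_t c t * a t) +i* (\sum_t c t * b t).
  rewrite (eq_bigr (fun t => (c t * a t) +i* (c t * b t))) => [|t _]; last first.
    by apply/eqP; rewrite eq_complex /= !mul0r subr0 addr0 !eqxx.
  by apply/eqP; rewrite eq_complex Re_sum Im_sum !eqxx.
move=> gV Q' M hQ' hM; have [pr [pi [hpr hpi e]]] := inV_orbit_poly M gV.
rewrite /quad_avg (eq_bigr (fun t => (w t)%:C * (pr (Q t *m Q') +i* pi (Q t *m Q')))).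
  rewrite [RHS](eq_bigr (fun t => (w t)%:C * (pr (Q t) +i* pi (Q t)))) => [|t _].
    by rewrite !sum_cplx !(quadrature_rotr H_Haar w_exact w_sum1 Q_SO K_le_nq _ hQ').
  by rewrite e.
by move=> t _; rewrite rotM e // SOsetM.
Qed.

Variables (m mI : nat) (phi : 'I_m -> 'M[R]_(N, k) -> R[i]).
Hypotheses (phiV : forall j, inV R N k K (phi j))
  (phi_orthonormal : forall j l, l2inner R N k mu (phi j) (phi l) = (j == l)%:R)
  (phiB : forall j : 'I_m, (j < mI)%N -> inB R N k K (phi j))
  (B_span : forall g, inB R N k K g -> exists c : 'I_m -> R[i],
     (forall j : 'I_m, (mI <= j)%N -> c j = 0) /\
     forall M, M \in sphereN R N k -> g M = \sum_j c j * phi j M).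

Lemma cpoly_phi j : cpoly (phi j).
Proof. exact: inV_cpoly (phiV j). Qed.

Lemma cpoly_phi_inner j l : cpoly (fun M => phi j M * (phi l M)^*).
Proof. by apply: cpoly_mul (cpoly_phi j) (cpoly_conj (cpoly_phi l)). Qed.

Lemma l2inner_expansion (c : 'I_m -> R[i]) g l :
  {in sphereN R N k, g =1 fun M => \sum_j c j * phi j M} ->
  l2inner R N k mu g (phi l) = c l.
Proof.
move=> e; have inner j : cint R N k mu (fun M => phi j M * (phi l M)^*) = (j == l)%:R.
  exact: phi_orthonormal.
rewrite /l2inner (@eq_cint _ _ _ mu _ (fun M => \sum_j c j * (phi j M * (phi l M)^*))).
  rewrite (cint_sum sigma_unif mu_prod _ _ (fun j => cpoly_phi_inner j l)) (bigD1 l) //=.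
  rewrite inner eqxx mulr1 big1 ?addr0 // => j /negbTE njl.
  by rewrite inner njl mulr0.
by move=> M hM; rewrite e // mulr_suml; apply: eq_bigr => j _; rewrite mulrA.
Qed.

(* [psi := quad_avg (phi j)] lies in [B_K]; its coefficients on the invariant
   basis functions are [<psi, phi_l> = sum_t w_t <phi_j o Q_t, phi_l o Q_t>
   = sum_t w_t <phi_j, phi_l> = 0]. *)
Lemma quad_avg_perp_eq0 (j : 'I_m) : (mI <= j)%N ->
  {in sphereN R N k, quad_avg (phi j) =1 fun=> 0}.
Proof.
move=> mI_le_j.
have [c [c_perp psiE]] := B_span (conj (quad_avg_inV (phiV j)) (quad_avg_rot_inv (phiV j))).
suff c0 l : c l = 0 by move=> M hM; rewrite psiE //; apply: big1 => l _; rewrite c0 mul0r.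
have [mI_le_l|l_lt_mI] := leqP mI l; first exact: c_perp.
have [_ phil_inv] := phiB l_lt_mI.
rewrite -(l2inner_expansion l psiE) /l2inner.
rewrite (@eq_cint _ _ _ mu _ (fun M => \sum_t (w t)%:C *
    (phi j (rot (Q t) M) * (phi l (rot (Q t) M))^*))); last first.
  move=> M hM; rewrite /quad_avg mulr_suml; apply: eq_bigr => t _.
  by rewrite phil_inv // mulrA.
rewrite (cint_sum sigma_unif mu_prod) => [|t]; last exact: cpoly_rot (cpoly_phi_inner j l).
apply: big1 => t _; rewrite (cint_rot sigma_unif mu_prod (Q_SO t) (cpoly_phi_inner j l)).
have := phi_orthonormal j l; rewrite /l2inner => ->.
by case: eqP => [jl|_]; rewrite ?mulr0 //; move: l_lt_mI; rewrite -jl ltnNge mI_le_j.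
Qed.

End QuadratureAverage.

(** * Weighted sums of squared residuals *)

Section WeightedSquares.
Variables (R : realType) (n T : nat) (w : 'I_T -> R).

Lemma sqmodD (z u : R[i]) : sqmod R (z + u) =
  sqmod R z + sqmod R u + 2 * (complex.Re z * complex.Re u + complex.Im z * complex.Im u).
Proof. by case: z => a b; case: u => c e; rewrite /sqmod /=; ring. Qed.

Lemma sqmod_eq0 (z : R[i]) : sqmod R z = 0 -> z = 0.
Proof.
case: z => a b; rewrite /sqmod /= => /eqP; rewrite paddr_eq0 ?sqr_ge0 //.
by rewrite !sqrf_eq0 => /andP[/eqP -> /eqP ->].
Qed.

Lemma sqnorm_ge0 (v : 'cV[R[i]]_n) : 0 <= sqnorm R n v.
Proof. by apply: sumr_ge0 => i _; exact: sqmod_ge0. Qed.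

Lemma sqnorm_eq0 (v : 'cV[R[i]]_n) : sqnorm R n v = 0 -> v = 0.
Proof.
move=> /eqP; rewrite psumr_eq0 => [/allP v0|i _]; last exact: sqmod_ge0.
apply/matrixP => i j; rewrite ord1 mxE; apply: sqmod_eq0.
by apply/eqP; exact: v0 (mem_index_enum _).
Qed.

(* Cross terms cancel because the perturbations [u t] have zero weighted mean. *)
Lemma wsum_sqnorm_split (z : 'cV[R[i]]_n) (u : 'I_T -> 'cV[R[i]]_n) :
  \sum_t (w t)%:C *: u t = 0 ->
  \sum_t w t * sqnorm R n (z + u t) =
  \sum_t w t * sqnorm R n z + \sum_t w t * sqnorm R n (u t).
Proof.
move=> /matrixP u_mean.
have hRe i : \sum_t w t * complex.Re (u t i 0) = 0.
  have := congr1 (@complex.Re R) (u_mean i 0); rewrite summxE Re_sum mxE.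
  by under eq_bigr do rewrite mxE [X in complex.Re X]mulrC Re_rmul mulrC.
have hIm i : \sum_t w t * complex.Im (u t i 0) = 0.
  have := congr1 (@complex.Im R) (u_mean i 0); rewrite summxE Im_sum mxE.
  by under eq_bigr do rewrite mxE [X in complex.Im X]mulrC Im_rmul mulrC.
rewrite /sqnorm -big_split /=.
transitivity (\sum_t (w t * \sum_i sqmod R (z i 0) + w t * \sum_i sqmod R (u t i 0)
   + \sum_i 2 * (complex.Re (z i 0) * (w t * complex.Re (u t i 0)) +
                 complex.Im (z i 0) * (w t * complex.Im (u t i 0))))).
  apply: eq_bigr => t _; rewrite -mulrDr -big_split /= !big_distrr /= -big_split /=.
  by apply: eq_bigr => i _; rewrite mxE sqmodD; ring.
rewrite big_split /= [X in _ + X]exchange_big /= [X in _ + X]big1 ?addr0 // => i _.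
by rewrite -big_distrr /= big_split /= -!big_distrr /= hRe hIm !mulr0 addr0 mulr0.
Qed.

Lemma wsum_sqnorm_le0 (u : 'I_T -> 'cV[R[i]]_n) : (forall t, 0 < w t) ->
  \sum_t w t * sqnorm R n (u t) <= 0 -> forall t, u t = 0.
Proof.
move=> w_gt0 le0 t; have ge0 t' : 0 <= w t' * sqnorm R n (u t').
  exact: mulr_ge0 (ltW (w_gt0 t')) (sqnorm_ge0 _).
have /psumr_eq0P /(_ t isT) : \sum_t w t * sqnorm R n (u t) = 0.
  by apply/eqP; rewrite eq_le le0 sumr_ge0.
by move=> /(_ (fun t _ => ge0 t)) /eqP; rewrite mulf_eq0 gt_eqF //= => /eqP /sqnorm_eq0.
Qed.

End WeightedSquares.

(** * The augmented least-squares problem *)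

Section AugmentedRegression.
Variable R : realType.
Variables (N k K : nat) (sigma : {measure set (Mx R 1 k) -> \bar R})
  (mu : {measure set (Mx R N k) -> \bar R}) (H : {measure set (Mx R k k) -> \bar R}).
Hypotheses (sigma_unif : is_unif_sphere R k sigma)
  (mu_prod : is_product_measure R N k sigma mu) (H_Haar : is_Haar R k H).
Variables (m mI : nat) (phi : 'I_m -> 'M[R]_(N, k) -> R[i]).
Hypotheses (phiV : forall j, inV R N k K (phi j))
  (phi_orthonormal : forall j l, l2inner R N k mu (phi j) (phi l) = (j == l)%:R)
  (V_span : forall g, inV R N k K g -> exists c : 'I_m -> R[i],
     forall M, M \in sphereN R N k -> g M = \sum_j c j * phi j M)
  (phiB : forall j : 'I_m, (j < mI)%N -> inB R N k K (phi j))
  (B_span : forall g, inB R N k K g -> exists c : 'I_m -> R[i],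
     (forall j : 'I_m, (mI <= j)%N -> c j = 0) /\
     forall M, M \in sphereN R N k -> g M = \sum_j c j * phi j M).
Variables (n : nat) (Rp : 'I_n -> 'M[R]_(N, k)) (Y : 'cV[R[i]]_n).
Hypotheses (Rp_sphere : forall i, Rp i \in sphereN R N k)
  (A_rank : \rank (design R N k n m phi Rp 1%:M) = m).
Variables (T nq : nat) (w : 'I_T -> R) (Q : 'I_T -> 'M[R]_k).
Hypotheses (w_gt0 : forall t, 0 < w t) (w_sum1 : \sum_t w t = 1)
  (Q_SO : forall t, Q t \in SOset R k)
  (w_exact : quadrature_exact R k T nq H w Q) (K_le_nq : (K <= nq)%N).

Local Notation rot := (Defs.rot R N k).
Local Notation design := (design R N k n m phi Rp).
Local Notation fexpand := (fexpand R N k m phi).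
Local Notation L_aug := (L_aug R N k n m T phi Rp Y w Q).

Definition inv_part (beta : 'cV[R[i]]_m) : 'cV[R[i]]_m :=
  \col_j (if (j < mI)%N then beta j 0 else 0).

Lemma perp_partE beta j :
  (beta - inv_part beta) j 0 = if (mI <= j)%N then beta j 0 else 0.
Proof. by rewrite !mxE; case: ltnP; rewrite ?subrr ?subr0. Qed.

Lemma fexpandD beta beta' M : fexpand (beta + beta') M = fexpand beta M + fexpand beta' M.
Proof. by rewrite /Defs.fexpand /= -big_split; apply: eq_bigr => j _; rewrite mxE mulrDl. Qed.

Lemma design_fexpand Q' beta i : (design Q' *m beta) i 0 = fexpand beta (rot Q' (Rp i)).
Proof. by rewrite mxE; apply: eq_bigr => j _; rewrite mxE mulrC. Qed.

Lemma fexpand_inv_part_rot beta Q' M : Q' \in SOset R k -> M \in sphereN R N k ->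
  fexpand (inv_part beta) (rot Q' M) = fexpand (inv_part beta) M.
Proof.
move=> hQ' hM; apply: eq_bigr => j _; rewrite mxE.
by case: ifP => [/phiB [_ ->] //|_]; rewrite !mul0r.
Qed.

Lemma design_inv_part beta Q' : Q' \in SOset R k ->
  design Q' *m inv_part beta = design 1%:M *m inv_part beta.
Proof.
move=> hQ'; apply/matrixP => i j; rewrite ord1 !design_fexpand rot1.
exact: fexpand_inv_part_rot.
Qed.

Lemma wavg_design_perp beta :
  \sum_t (w t)%:C *: (design (Q t) *m (beta - inv_part beta)) = 0.
Proof.
apply/matrixP => i j; rewrite ord1 summxE mxE.
under eq_bigr do rewrite mxE design_fexpand /Defs.fexpand big_distrr.
rewrite exchange_big /=; apply: big1 => l _; rewrite perp_partE.
case: leqP => [mI_le_l|_]; last by apply: big1 => t _; rewrite mul0r mulr0.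
have avg0 := quad_avg_perp_eq0 sigma_unif mu_prod H_Haar w_sum1 Q_SO w_exact K_le_nq
  phiV phi_orthonormal phiB B_span mI_le_l (Rp_sphere i).
transitivity (beta l 0 * quad_avg w Q (phi l) (Rp i)); last by rewrite avg0 mulr0.
by rewrite /quad_avg mulr_sumr; apply: eq_bigr => t _; ring.
Qed.

Lemma L_aug_split beta : L_aug beta =
  L_aug (inv_part beta) + 2^-1 * \sum_t w t * sqnorm R n (design (Q t) *m (beta - inv_part beta)).
Proof.
have resE t : design (Q t) *m beta - Y =
    (design 1%:M *m inv_part beta - Y) + design (Q t) *m (beta - inv_part beta).
  by rewrite mulmxBr -(design_inv_part beta (Q_SO t)); rewrite addrAC subrKC.
rewrite /Defs.L_aug; under eq_bigr do rewrite resE.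
rewrite wsum_sqnorm_split ?wavg_design_perp // mulrDr; congr (_ * _ + _).
by apply: eq_bigr => t _; rewrite design_inv_part.
Qed.

Section Minimiser.
Variable beta : 'cV[R[i]]_m.
Hypothesis beta_min : forall beta', L_aug beta <= L_aug beta'.

Lemma minimiser_design_perp t : design (Q t) *m (beta - inv_part beta) = 0.
Proof.
apply: (@wsum_sqnorm_le0 _ _ _ w (fun t => design (Q t) *m (beta - inv_part beta)) w_gt0).
have := beta_min (inv_part beta); rewrite L_aug_split gerDl.
by rewrite pmulr_rle0 // invr_gt0.
Qed.

Lemma inV_eq0_at_data g : inV R N k K g -> (forall i, g (Rp i) = 0) ->
  {in sphereN R N k, g =1 fun=> 0}.
Proof.
move=> gV g0; have [c gE] := V_span gV.
have /eqP c0 : (\col_j c j)^T == 0.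
  have A_free : row_free (design 1%:M)^T by rewrite /row_free mxrank_tr A_rank.
  rewrite -(mulmx_free_eq0 _ A_free) -trmx_mul -trmx0; apply/eqP; congr _^T.
  apply/matrixP => i j; rewrite ord1 design_fexpand rot1 [RHS]mxE -(g0 i) gE //.
  by apply: eq_bigr => l _; rewrite mxE.
move=> M hM; rewrite gE //; apply: big1 => j _.
by move/matrixP: c0 => /(_ 0 j); rewrite !mxE => ->; rewrite mul0r.
Qed.

Lemma minimiser_fexpand_perp : {in sphereN R N k, fexpand (beta - inv_part beta) =1 fun=> 0}.
Proof.
have [t0 _] : exists t0 : 'I_T, true.
  case: (pickP (@predT 'I_T)) => [t0 _|T0]; first by exists t0.
  by move: w_sum1; rewrite big_pred0 // => /eqP; rewrite eq_sym oner_eq0.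
pose g := fun M => fexpand (beta - inv_part beta) (rot (Q t0) M).
have g0 : {in sphereN R N k, g =1 fun=> 0}.
  apply: inV_eq0_at_data => [|i]; last by rewrite /g -design_fexpand minimiser_design_perp mxE.
  by apply: inV_rot (Q_SO t0) _; exact: inV_lin.
move=> M hM; rewrite -(rotK M (Q_SO t0)) -[LHS]/(g _) g0 //.
by apply: rot_sphereN => //; exact: SOset_trmx.
Qed.

Lemma minimiser_inv_L2 : inv_L2 R N k mu (fexpand beta).
Proof.
have fexpandE M : M \in sphereN R N k -> fexpand beta M = fexpand (inv_part beta) M.
  move=> hM; rewrite -[in LHS](subrKC (inv_part beta) beta) fexpandD.
  by rewrite minimiser_fexpand_perp // addr0.
apply: (cpoly_inv_L2 sigma_unif mu_prod) => [|Q' M hQ' hM].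
  by apply: cpoly_sum => j; apply: cpoly_mul (cpoly_cst _ _ _) (inV_cpoly (phiV j)).
by rewrite !fexpandE ?fexpand_inv_part_rot //; exact: rot_sphereN.
Qed.

End Minimiser.

End AugmentedRegression.

Unset Implicit Arguments.

Theorem mainTheorem6 (R : realType) (N d K : nat)
  (sigma : {measure set (Mx R 1 d.+1) -> \bar R})
  (mu : {measure set (Mx R N d.+1) -> \bar R})
  (H : {measure set (Mx R d.+1 d.+1) -> \bar R}) :
  is_unif_sphere R d.+1 sigma ->
  is_product_measure R N d.+1 sigma mu ->
  is_Haar R d.+1 H ->
  forall (m mI : nat) (phi : 'I_m -> matrix R N d.+1 -> R[i]),
  (mI <= m)%N ->
  (forall j, inV R N d.+1 K (phi j)) ->
  (forall j k, l2inner R N d.+1 mu (phi j) (phi k) = (j == k)%:R) ->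
  (forall g, inV R N d.+1 K g -> exists c : 'I_m -> R[i],
     forall M, M \in sphereN R N d.+1 -> g M = \sum_j c j * phi j M) ->
  (forall j : 'I_m, (j < mI)%N -> inB R N d.+1 K (phi j)) ->
  (forall g, inB R N d.+1 K g -> exists c : 'I_m -> R[i],
     (forall j : 'I_m, (mI <= j)%N -> c j = 0) /\
     forall M, M \in sphereN R N d.+1 -> g M = \sum_j c j * phi j M) ->
  (forall j : 'I_m, (mI <= j)%N ->
     forall g, inB R N d.+1 K g -> l2inner R N d.+1 mu (phi j) g = 0) ->
  forall (n : nat) (Rp : 'I_n -> matrix R N d.+1) (f : matrix R N d.+1 -> R[i]),
  (forall i, Rp i \in sphereN R N d.+1) ->
  rot_inv R N d.+1 f ->
  let Y : matrix R[i] n 1 := \col_i f (Rp i) in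
  let A := design R N d.+1 n m phi Rp 1%:M in
  \rank A = m ->
  forall (T nq : nat) (w : 'I_T -> R) (Q : 'I_T -> matrix R d.+1 d.+1),
  (forall t, 0 < w t) ->
  \sum_t w t = 1 ->
  (forall t, Q t \in SOset R d.+1) ->
  quadrature_exact R d.+1 T nq H w Q ->
  (K <= nq)%N ->
  forall beta : matrix R[i] m 1,
  (forall beta', L_aug R N d.+1 n m T phi Rp Y w Q beta
                 <= L_aug R N d.+1 n m T phi Rp Y w Q beta') ->
  eps_sym R N d.+1 mu (fexpand R N d.+1 m phi beta) = 0%E.
Proof.
move=> sigma_unif mu_prod H_Haar m mI phi _ phiV phi_orthonormal V_span phiB B_span _
  n Rp f Rp_sphere _ Y A A_rank T nq w Q w_gt0 w_sum1 Q_SO w_exact K_le_nq beta beta_min.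
apply: eps_sym_eq0.
exact: (minimiser_inv_L2 sigma_unif mu_prod H_Haar phiV phi_orthonormal V_span phiB B_span
  Rp_sphere A_rank w_gt0 w_sum1 Q_SO w_exact K_le_nq beta_min).
Qed.
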